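(* Let $G$ be a graph. Then $\varphi_r(G-v)=\varphi_r(G)+\lfloor |V(G)|/2\rfloor-2$ for every vertex $v\in V(G)$ if and only if one of the following holds: (i) $G$ is $P_2$ or $C_3$; (ii) $E(G)=\emptyset$ and $4\le|V(G)|\le5$; (iii) $4\le |V(G)|\le 5$ and $G$ contains two edges with no common endpoint but contains no induced b-$3$-atom.
   Context: $P_2$ is the path on two vertices (a single edge) and $C_3$ the triangle. A proper $k$-coloring of $G$ is a surjective map $c:V(G)\to\{1,\ldots,k\}$ with $c(u)\ne c(v)$ for every edge $uv$. In a proper $k$-coloring, a vertex of color $i$ is a b-vertex if it has a neighbor of every color $j\ne i$. A b-$k$-coloring is a proper $k$-coloring in which every color class contains a b-vertex; $\varphi(G)$ is the largest $k$ such that $G$ has a b-$k$-coloring, and $\varphi_r(G)=\max\{\varphi(H): H\text{ an induced subgraph of }G\}$. A b-$t$-atom is a graph $A$ whose vertex set can be partitioned into $t$ sets $D_1,\ldots,D_t$, each $D_i$ containing a special vertex $c_i$, such that each $D_i$ is independent with $|D_i|\le t$ and, for all $i\ne j$, $c_i$ has a neighbor in $D_j$. *)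

(* Simple graphs: vertex finType T with a symmetric,
   irreflexive adjacency relation e : rel T. Induced subgraphs are given
   by vertex subsets S : {set T}. Colors are 0..k-1 (instead of 1..k). *)
From HB Require Import structures.
From mathcomp Require Import all_boot all_order all_algebra.
From Stdlib Require Import ClassicalDescription.
Set Implicit Arguments. Unset Strict Implicit. Unset Printing Implicit Defensive.

Section Graphs.
Variables (T : finType) (e : rel T).

(* c is a proper k-coloring of the induced subgraph G[S]
   (values of c outside S are irrelevant) *)
Definition proper_coloring (S : {set T}) (k : nat) (c : T -> nat) : Prop :=
  [/\ (forall x, x \in S -> c x < k),
      (forall j, j < k -> exists2 x, x \in S & c x = j) &
      (forall x y, x \in S -> y \in S -> e x y -> c x <> c y)].

Definition b_vertex (S : {set T}) (k : nat) (c : T -> nat) (x : T) : Prop :=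
  forall j, j < k -> j <> c x -> exists y, [/\ y \in S, e x y & c y = j].

Definition b_coloring (S : {set T}) (k : nat) (c : T -> nat) : Prop :=
  proper_coloring S k c /\
  (forall i, i < k -> exists x, [/\ x \in S, c x = i & b_vertex S k c x]).

Definition has_b_coloring (S : {set T}) (k : nat) : Prop :=
  exists c : T -> nat, b_coloring S k c.

Definition decide (P : Prop) : bool :=
  if excluded_middle_informative P then true else false.

(* phi(G[S]) : the largest k such that G[S] has a b-k-coloring
   (any such k satisfies k <= #|S| <= #|T|, by surjectivity) *)
Definition b_chrom (S : {set T}) : nat :=
  \max_(k < #|T|.+1 | decide (has_b_coloring S k)) k.

Definition b_chrom_r (A : {set T}) : nat :=
  \max_(S : {set T} | S \subset A) b_chrom S.

Definition is_b_atom (t : nat) (S : {set T}) : Prop :=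
  exists (D : 'I_t -> {set T}) (c : 'I_t -> T),
    [/\ \bigcup_(i < t) D i = S,
        (forall i j, i != j -> [disjoint D i & D j]),
        (forall i x y, x \in D i -> y \in D i -> ~~ e x y),
        (forall i, #|D i| <= t) &
        (forall i, c i \in D i)] /\
       (forall i j, i != j -> exists2 y, y \in D j & e (c i) y).

(* G is (isomorphic to) P_2, resp. C_3: complete graph on 2, resp. 3, vertices *)
Definition is_P2 : Prop := #|T| = 2 /\ (forall x y, x != y -> e x y).
Definition is_C3 : Prop := #|T| = 3 /\ (forall x y, x != y -> e x y).

End Graphs.

(* Deleting a vertex cannot increase phi_r, so the identity forces
   floor(n/2) <= 2; for n = 1 it would give phi_r(G) = 2 > n. Hence both sides
   of the equivalence confine G to 2 <= n <= 5 vertices. Both sides are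
   invariant under isomorphism, and "no induced b-3-atom" just says
   phi_r(G) <= 2, so it remains to decide the equivalence for every graph on
   the vertex set {0, ..., n-1}, n <= 5, which is done by computation: phi of
   each induced subgraph is found by testing one colouring per partition of
   its vertices into colour classes. *)
From HB Require Import structures.
From mathcomp Require Import all_boot all_order all_algebra zify.
From Stdlib Require ClassicalDescription.
Set Implicit Arguments. Unset Strict Implicit. Unset Printing Implicit Defensive.

Lemma decideP (P : Prop) : decide P <-> P.
Proof. by rewrite /decide; case: ClassicalDescription.excluded_middle_informative. Qed.

Lemma leq_bigmax_seqP (I : eqType) (r : seq I) (P : pred I) (F : I -> nat) t :
  0 < t -> t <= \max_(i <- r | P i) F i <-> exists2 i, i \in r & P i && (t <= F i).
Proof.
move=> t_gt0; split; last by case=> i ri /andP[Pi tFi]; apply: bigmaxn_sup_seq tFi.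
elim: r => [|i r IHr]; first by rewrite big_nil leqNgt t_gt0.
rewrite big_cons; case: ifP => Pi.
  rewrite leq_max => /orP[tFi | /IHr[j rj Pj]]; first by exists i; rewrite ?inE ?eqxx ?Pi.
  by exists j; rewrite ?inE ?rj ?orbT.
by case/IHr => j rj Pj; exists j; rewrite ?inE ?rj ?orbT.
Qed.

Lemma leq_bigmaxP (I : finType) (P : pred I) (F : I -> nat) t :
  0 < t -> t <= \max_(i | P i) F i <-> exists i, P i && (t <= F i).
Proof.
move=> t_gt0; rewrite (leq_bigmax_seqP _ _ _ t_gt0).
by split=> [[i _ PFi] | [i PFi]]; exists i; rewrite ?mem_index_enum.
Qed.

Lemma eqn_thresholds m n : (forall t, 0 < t -> t <= m <-> t <= n) -> m = n.
Proof.
move=> Hmn; apply/eqP; rewrite eqn_leq; apply/andP; split.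
  by case: m Hmn => // m Hmn; apply/(Hmn m.+1).
by case: n Hmn => // n Hmn; apply/(Hmn n.+1).
Qed.

Section BColorings.
Variables (T : finType) (e : rel T).
Implicit Types (S A B : {set T}) (k t : nat).

Lemma proper_coloring_card S k c : proper_coloring e S k c -> k <= #|S|.
Proof.
case=> _ c_onto _; rewrite cardE -(size_iota 0 k) -(size_map c).
apply: uniq_leq_size (iota_uniq 0 k) _ => j; rewrite mem_iota => /c_onto[x xS <-].
by apply: map_f; rewrite mem_enum.
Qed.

Lemma b_coloring_eq_in S k (c1 c2 : T -> nat) :
  {in S, c1 =1 c2} -> b_coloring e S k c1 -> b_coloring e S k c2.
Proof.
move=> c12 [[c_lt c_onto c_prop] c_b]; split; first split.
- by move=> x xS; rewrite -c12 //; apply: c_lt.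
- by move=> j /c_onto[x xS <-]; exists x; rewrite // c12.
- by move=> x y xS yS exy; rewrite -!c12 //; apply: c_prop.
move=> i /c_b[x [xS cx bx]]; exists x; split; rewrite -?c12 //.
move=> j jk; rewrite -c12 // => jx; have [y [yS exy cy]] := bx j jk jx.
by exists y; rewrite -c12.
Qed.

Lemma b_coloring_relabel S k (c : T -> nat) (g : nat -> nat) :
  {in gtn k, forall a, g a < k} -> {in gtn k &, injective g} ->
  (forall j, j < k -> exists2 a, a < k & g a = j) ->
  b_coloring e S k c -> b_coloring e S k (g \o c).
Proof.
move=> g_lt g_inj g_onto [[c_lt c_onto c_prop] c_b]; split; first split.
- by move=> x xS; apply/g_lt/c_lt.
- by move=> j /g_onto[a ak <-]; have [x xS cx] := c_onto a ak; exists x; rewrite /= ?cx.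
- move=> x y xS yS exy /g_inj; rewrite !inE => /(_ (c_lt x xS) (c_lt y yS)).
  exact: c_prop exy.
move=> i /g_onto[a ak <-]; have [x [xS cx bx]] := c_b a ak.
exists x; split; rewrite /= ?cx // => j /g_onto[b bk <-] ba.
have bcx : b <> c x by move=> bcx; apply: ba; rewrite /= -bcx.
have [y [yS exy cy]] := bx b bk bcx.
by exists y; rewrite /= cy.
Qed.

Lemma b_coloring_reindex S k (c : T -> nat) (Q : seq nat) :
  uniq Q -> Q =i gtn k -> b_coloring e S k c -> b_coloring e S k (fun x => index (c x) Q).
Proof.
move=> Q_uniq QE; have sizeQ : size Q = k.
  rewrite -(size_iota 0 k); apply/perm_size/uniq_perm; rewrite ?iota_uniq // => a.
  by rewrite QE mem_iota.
apply: (b_coloring_relabel (g := index^~ Q)) => [a | a b | j jk].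
- by rewrite -QE -sizeQ index_mem.
- by rewrite -!QE => aQ bQ ab; rewrite -(nth_index 0 aQ) -(nth_index 0 bQ) ab.
exists (nth 0 Q j); last by rewrite index_uniq // sizeQ.
by change (nth 0 Q j \in gtn k); rewrite -QE mem_nth // sizeQ.
Qed.

Lemma b_coloring_restrict S k (c : T -> nat) t : t <= k ->
  b_coloring e S k c -> b_coloring e [set x in S | c x < t] t c.
Proof.
move=> tk [[c_lt c_onto c_prop] c_b]; split; first split.
- by move=> x; rewrite inE => /andP[].
- move=> j jt; have [x xS cx] := c_onto j (leq_trans jt tk).
  by exists x; rewrite // inE xS cx.
- by move=> x y; rewrite !inE => /andP[xS _] /andP[yS _]; apply: c_prop.
move=> i it; have [x [xS cx bx]] := c_b i (leq_trans it tk).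
exists x; split; rewrite ?inE ?xS ?cx // => j jt jx.
have [y [yS exy cy]] := bx j (leq_trans jt tk) jx.
by exists y; rewrite inE yS cy.
Qed.

Lemma leq_b_chrom S t :
  0 < t -> t <= b_chrom e S <-> exists2 k, t <= k & has_b_coloring e S k.
Proof.
move=> t_gt0; rewrite (leq_bigmaxP _ _ t_gt0); split.
  by case=> k /andP[/decideP Sk tk]; exists k.
case=> k tk [c Sc]; have kT : k < #|T|.+1.
  by case: Sc => /proper_coloring_card kS _; rewrite ltnS (leq_trans kS) ?max_card.
by exists (Ordinal kT); rewrite tk andbT; apply/decideP; exists c.
Qed.

Lemma leq_b_chrom_r A t :
  0 < t -> t <= b_chrom_r e A <-> exists2 S : {set T}, S \subset A & has_b_coloring e S t.
Proof.
move=> t_gt0; rewrite (leq_bigmaxP _ _ t_gt0); split.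
  case=> S /andP[SA /(leq_b_chrom _ t_gt0)[k tk [c Sc]]].
  exists [set x in S | c x < t]; last by exists c; apply: b_coloring_restrict Sc.
  by apply: subset_trans SA; apply/subsetP => x; rewrite inE => /andP[].
case=> S SA St; exists S; rewrite SA /=.
by apply/(leq_b_chrom _ t_gt0); exists t.
Qed.

Lemma b_chrom_rS A B : A \subset B -> b_chrom_r e A <= b_chrom_r e B.
Proof.
move=> AB; case def_a: (b_chrom_r e A) => [//|a].
have [S SA St] := (leq_b_chrom_r A (ltn0Sn a)).1 (eq_leq (esym def_a)).
by apply/(leq_b_chrom_r _ (ltn0Sn a)); exists S; first exact: subset_trans AB.
Qed.

Lemma b_chrom_r_card A : b_chrom_r e A <= #|A|.
Proof.
case def_a: (b_chrom_r e A) => [//|a].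
have [S SA [c [Sc _]]] := (leq_b_chrom_r A (ltn0Sn a)).1 (eq_leq (esym def_a)).
exact: leq_trans (proper_coloring_card Sc) (subset_leq_card SA).
Qed.

Lemma b_atom_b_coloring t S : is_b_atom e t S -> has_b_coloring e S t.
Proof.
case=> D [c [[DU D_disj D_indep _ cD] c_adj]].
have DS i x : x \in D i -> x \in S by rewrite -DU => xDi; apply/bigcupP; exists i.
pose col x := if [pick i | x \in D i] is Some i then nat_of_ord i else 0.
have colE i x : x \in D i -> col x = i.
  move=> xDi; rewrite /col; case: pickP => [j xDj | /(_ i)]; last by rewrite xDi.
  have [-> // | ji] := eqVneq j i.
  by have := disjointFr (D_disj j i ji) xDj; rewrite xDi.
exists col; split; first split.
- by move=> x; rewrite -DU => /bigcupP[i _ xDi]; rewrite (colE _ _ xDi) ltn_ord.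
- move=> j jt; exists (c (Ordinal jt)); first exact: DS (cD _).
  by rewrite (colE _ _ (cD _)).
- move=> x y; rewrite -DU => /bigcupP[i _ xDi] /bigcupP[j _ yDj] exy.
  rewrite (colE _ _ xDi) (colE _ _ yDj) => /val_inj ij; move: yDj; rewrite -ij => yDi.
  by move: (D_indep i x y xDi yDi); rewrite exy.
move=> i it; exists (c (Ordinal it)); split; [exact: DS (cD _) | exact: colE (cD _) |].
move=> j jt; rewrite (colE _ _ (cD _)) => ji.
have [|y yDj cy] := c_adj (Ordinal it) (Ordinal jt); first by apply/eqP => -[/esym].
by exists y; rewrite (colE _ _ yDj) (DS _ _ yDj).
Qed.

Lemma b_coloring_b_atom t S :
  has_b_coloring e S t -> exists2 S' : {set T}, S' \subset S & is_b_atom e t S'.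
Proof.
case=> c [[c_lt c_onto c_prop] c_b].
have /fin_all_exists[x xP] : forall i : 'I_t,
    exists x, [/\ x \in S, c x = i & b_vertex e S t c x] by move=> i; apply: c_b.
have /fin_all_exists[y yP] : forall i : 'I_t, exists y : 'I_t -> T,
    forall j : 'I_t, i != j -> [/\ y j \in S, e (x i) (y j) & c (y j) = j].
  move=> i; apply: (@fin_all_exists _ (fun=> T)
    (fun j u => i != j -> [/\ u \in S, e (x i) u & c u = j])).
  move=> j; have [<- | ij] := eqVneq i j; first by exists (x i).
  have [_ cxi bxi] := xP i.
  have jxi : nat_of_ord j <> c (x i) by rewrite cxi => /val_inj ji; rewrite ji eqxx in ij.
  by have [u [uS exu cu]] := bxi j (ltn_ord j) jxi; exists u.
(* The b-vertex of colour j with the colour-j neighbours of the other b-vertices. *)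
pose D j := x j |: [set y i j | i in [set~ j]].
have DP j z : z \in D j -> z \in S /\ c z = j.
  rewrite !inE => /orP[/eqP -> | /imsetP[i]]; first by have [] := xP j.
  by rewrite !inE => ij ->; have [] := yP i j ij.
exists (\bigcup_(i < t) D i).
  by apply/subsetP => z /bigcupP[i _ /DP[]].
exists D, x; split; first split => //.
- move=> i j ij; rewrite -setI_eq0; apply/eqP/setP => z; rewrite in_setI in_set0.
  apply/negbTE/andP => -[/DP[_ czi] /DP[_ czj]].
  by move: ij; rewrite (ord_inj (etrans (esym czi) czj)) eqxx.
- move=> i z w /DP[zS czi] /DP[wS cwi]; apply/negP => ezw.
  by apply: c_prop ezw _; rewrite ?czi ?cwi.
- move=> i; rewrite cardsU1 (leq_trans (leq_add (leq_b1 _) (leq_imset_card _ _))) //.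
  by rewrite cardsC1 card_ord add1n prednK // (leq_ltn_trans _ (ltn_ord i)).
- by move=> i; rewrite !inE eqxx.
move=> i j ij; exists (y i j); last by have [] := yP i j ij.
by apply/setU1P; right; apply/imsetP; exists i; rewrite ?inE.
Qed.

Lemma b_atom_leq_b_chrom_r t :
  0 < t -> (exists S, is_b_atom e t S) <-> t <= b_chrom_r e [set: T].
Proof.
move=> t_gt0; rewrite (leq_b_chrom_r _ t_gt0); split.
  by case=> S /b_atom_b_coloring St; exists S; rewrite ?subsetT.
by case=> S _ /b_coloring_b_atom[S' _ S'_atom]; exists S'.
Qed.

End BColorings.

Section Pullback.
Variables (T T' : finType) (e : rel T) (e' : rel T') (f : T' -> T) (g : T -> T').
Hypotheses (gK : cancel g f) (f_edge : forall x y, e' x y = e (f x) (f y)).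
Implicit Types (S A : {set T}) (k : nat).

Lemma has_b_coloring_preim S k :
  has_b_coloring e S k -> has_b_coloring e' (f @^-1: S) k.
Proof.
case=> c [[c_lt c_onto c_prop] c_b]; exists (c \o f); split; first split.
- by move=> x; rewrite inE => /c_lt.
- by move=> j /c_onto[x xS <-]; exists (g x); rewrite /= ?inE gK.
- by move=> x y; rewrite !inE f_edge; apply: c_prop.
move=> i /c_b[x [xS cx bx]]; exists (g x); split; rewrite ?inE /= ?gK //.
move=> j jk; rewrite /= gK => jx; have [y [yS exy cy]] := bx j jk jx.
by exists (g y); rewrite inE f_edge !gK.
Qed.

Lemma b_chrom_r_preim A : b_chrom_r e A <= b_chrom_r e' (f @^-1: A).
Proof.
case def_a: (b_chrom_r e A) => [//|a].
have [S SA St] := (leq_b_chrom_r e A (ltn0Sn a)).1 (eq_leq (esym def_a)).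
apply/(leq_b_chrom_r _ _ (ltn0Sn a)); exists (f @^-1: S); first exact: preimsetS.
exact: has_b_coloring_preim.
Qed.

End Pullback.

Definition complete_graph (T : finType) (e : rel T) : Prop :=
  forall x y : T, x != y -> e x y.

Definition edgeless (T : finType) (e : rel T) : Prop := forall x y : T, ~~ e x y.

Definition has_disjoint_edges (T : finType) (e : rel T) : Prop :=
  exists x y u w : T, [/\ e x y, e u w & [disjoint [set x; y] & [set u; w]]].

Definition exceptional_graph (T : finType) (e : rel T) : Prop :=
  [\/ is_P2 e \/ is_C3 e, edgeless e /\ 4 <= #|T| <= 5
    | 4 <= #|T| <= 5 /\ has_disjoint_edges e /\ ~ (exists S : {set T}, is_b_atom e 3 S)].

Definition deletion_identity (T : finType) (e : rel T) : Prop :=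
  forall v : T, b_chrom_r e [set~ v] + 2 = b_chrom_r e [set: T] + #|T| %/ 2.

Lemma disjoint_set2 (U : finType) (x y u w : U) :
  [disjoint [set x; y] & [set u; w]] = [&& x != u, x != w, y != u & y != w].
Proof.
rewrite -setI_eq0; apply/eqP/and4P => [xyuw | [xu xw yu yw]].
  by split; apply/eqP => E;
    [have := in_set0 x | have := in_set0 x | have := in_set0 y | have := in_set0 y];
    rewrite -xyuw !inE E !eqxx ?orbT.
apply/setP => z; rewrite !inE; apply/negbTE/andP => -[].
by case/orP=> /eqP-> /orP[]/eqP E; rewrite E eqxx in xu xw yu yw.
Qed.

Lemma or3_iff (P Q R P' Q' R' : Prop) :
  (P <-> P') -> (Q <-> Q') -> (R <-> R') -> [\/ P, Q | R] <-> [\/ P', Q' | R'].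
Proof.
move=> PP' QQ' RR'; split=> -[] H;
  [apply: Or31 | apply: Or32 | apply: Or33 | apply: Or31 | apply: Or32 | apply: Or33]; tauto.
Qed.

Section GraphIsomorphism.
Variables (T T' : finType) (e : rel T) (e' : rel T') (f : T' -> T) (g : T -> T').
Hypotheses (fK : cancel f g) (gK : cancel g f).
Hypothesis f_edge : forall x y, e' x y = e (f x) (f y).
Implicit Types (A : {set T}).

Let g_edge x y : e x y = e' (g x) (g y). Proof. by rewrite f_edge !gK. Qed.

Lemma b_chrom_r_iso A : b_chrom_r e' (f @^-1: A) = b_chrom_r e A.
Proof.
apply/eqP; rewrite eqn_leq (b_chrom_r_preim gK f_edge) andbT.
have /eqP {2}<- : g @^-1: (f @^-1: A) == A by apply/eqP/setP => x; rewrite !inE gK.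
exact: (b_chrom_r_preim fK g_edge).
Qed.

Lemma card_iso : #|T'| = #|T|.
Proof. by apply: bij_eq_card; exists g. Qed.

Lemma complete_graph_iso : complete_graph e' <-> complete_graph e.
Proof.
split=> Kn x y xy; last by rewrite f_edge Kn // (can_eq fK).
by rewrite g_edge Kn // (can_eq gK).
Qed.

Lemma edgeless_iso : edgeless e' <-> edgeless e.
Proof. by split=> E0 x y; [rewrite g_edge | rewrite f_edge]. Qed.

Lemma has_disjoint_edges_iso : has_disjoint_edges e' <-> has_disjoint_edges e.
Proof.
split; case=> x [y [u [w [exy euw]]]]; rewrite disjoint_set2 => xyuw.
  by exists (f x), (f y), (f u), (f w); rewrite -!f_edge disjoint_set2 !(can_eq fK).
by exists (g x), (g y), (g u), (g w); rewrite -!g_edge disjoint_set2 !(can_eq gK).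
Qed.

Lemma exceptional_graph_iso : exceptional_graph e' <-> exceptional_graph e.
Proof.
have K := complete_graph_iso; have E := edgeless_iso; have D := has_disjoint_edges_iso.
have A : (exists S, is_b_atom e' 3 S) <-> (exists S, is_b_atom e 3 S).
  by rewrite !b_atom_leq_b_chrom_r // -(b_chrom_r_iso setT) preimsetT.
rewrite /exceptional_graph /is_P2 /is_C3 card_iso -/(complete_graph e') -/(complete_graph e).
apply: or3_iff; tauto.
Qed.

Lemma deletion_identity_iso : deletion_identity e' <-> deletion_identity e.
Proof.
have preC v : f @^-1: [set~ v] = [set~ g v].
  by apply/setP => x; rewrite !inE (can2_eq fK gK).
rewrite /deletion_identity card_iso -(b_chrom_r_iso setT) preimsetT.
split=> id_e v; first by rewrite -b_chrom_r_iso preC.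
by rewrite -[v]fK -preC b_chrom_r_iso.
Qed.

End GraphIsomorphism.

(* [\max] is opaque to [vm_compute]; this is its evaluable unfolding. *)
Definition max_over (I : Type) (s : seq I) (P : pred I) (F : I -> nat) : nat :=
  foldr (fun x acc => if P x then maxn (F x) acc else acc) 0 s.

Lemma max_overE (I : Type) (s : seq I) (P : pred I) (F : I -> nat) :
  max_over s P F = \max_(x <- s | P x) F x.
Proof. by rewrite unlock. Qed.

Fixpoint masks n : seq (seq bool) :=
  if n is n'.+1 then [seq b :: m | b <- [:: false; true], m <- masks n'] else [:: [::]].

Lemma mem_masks n m : (m \in masks n) = (size m == n).
Proof.
elim: n m => [|n IHn] [|b m] //; first by apply/negbTE/allpairsP => -[[b m] []].
apply/allpairsP/idP => [[[b' m'] [_ m'n [_ ->]]] | mn]; first by rewrite /= eqSS -IHn.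
by rewrite /= eqSS -IHn in mn; exists (b, m); split; first case: b.
Qed.

(* Restricted growth strings on the positions selected by [m]: colours are
   numbered in order of first appearance, [d] being the number already used,
   so every colouring is a relabelling of one of them (see [rgs_relabel]). *)
Fixpoint rgs (m : seq bool) (d : nat) : seq (seq nat) :=
  if m is b :: m' then
    if b then [seq j :: r | j <- iota 0 d.+1, r <- rgs m' (if j == d then d.+1 else d)]
    else [seq 0 :: r | r <- rgs m' d]
  else [:: [::]].

Lemma rgs_relabel (m : seq bool) (l P : seq nat) : size l = size m -> uniq P ->
  exists r Q, [/\ r \in rgs m (size P), uniq (P ++ Q),
    {in Q, forall a, exists2 i, nth false m i & nth 0 l i = a} &
    forall i, nth false m i -> nth 0 l i \in P ++ Q /\ nth 0 r i = index (nth 0 l i) (P ++ Q)].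
Proof.
elim: m l P => [|b m IHm] [|a l] P // => [_ | [size_l] P_uniq].
  by move=> P_uniq; exists [::], [::]; rewrite cats0 inE; split=> // i; rewrite nth_nil.
have shiftQ Q : {in Q, forall a', exists2 i, nth false m i & nth 0 l i = a'} ->
    {in Q, forall a', exists2 i, nth false (b :: m) i & nth 0 (a :: l) i = a'}.
  by move=> HQ a' /HQ[i mi li]; exists i.+1.
case: b shiftQ => shiftQ; last first.
  have [r [Q [r_rgs PQ_uniq /shiftQ HQ Hr]]] := IHm l P size_l P_uniq.
  by exists (0 :: r), Q; split=> //; [apply: map_f | case].
have [aP | aNP] := boolP (a \in P).
  have [r [Q [r_rgs PQ_uniq /shiftQ HQ Hr]]] := IHm l P size_l P_uniq.
  exists (index a P :: r), Q; split=> //; last first.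
    by case=> [_ | i /Hr //]; rewrite /= mem_cat aP index_cat aP.
  have idx_lt : index a P < size P by rewrite index_mem.
  apply/allpairsPdep; exists (index a P), r; split=> //.
    by rewrite mem_iota /= ltnS ltnW.
  by rewrite ltn_eqF.
have Pa_uniq : uniq (rcons P a) by rewrite rcons_uniq aNP.
have [r [Q [r_rgs PQ_uniq HQ Hr]]] := IHm l (rcons P a) size_l Pa_uniq.
rewrite cat_rcons in PQ_uniq Hr.
exists (size P :: r), (a :: Q); split=> //.
- apply/allpairsPdep; exists (size P), r.
  by rewrite mem_iota /= ltnS leqnn eqxx -(size_rcons P a).
- by move=> a'; rewrite inE => /predU1P[-> | /HQ[i mi li]]; [exists 0 | exists i.+1].
by case=> [_ | i /Hr //]; rewrite /= mem_cat inE eqxx orbT index_cat (negbTE aNP) /= eqxx addn0.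
Qed.

Section Decision.
Variables (n : nat) (adj : nat -> nat -> bool).

Definition graph_rel : rel 'I_n := fun x y => adj x y.

Definition set_of_mask (m : seq bool) : {set 'I_n} := [set x : 'I_n | nth false m x].

Definition support (m : seq bool) : seq nat := [seq i <- iota 0 n | nth false m i].

Definition b_coloring_c (sv : seq nat) (k : nat) (l : seq nat) : bool :=
  [&& all (fun x => nth 0 l x < k) sv,
      all (fun j => has (fun x => nth 0 l x == j) sv) (iota 0 k),
      all (fun x => all (fun y => adj x y ==> (nth 0 l x != nth 0 l y)) sv) sv &
      all (fun i => has (fun x => (nth 0 l x == i) &&
         all (fun j => (j != nth 0 l x) ==> has (fun y => adj x y && (nth 0 l y == j)) sv)
             (iota 0 k)) sv) (iota 0 k)].

Definition ncolors (sv l : seq nat) : nat := foldr maxn 0 [seq (nth 0 l x).+1 | x <- sv].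

Definition b_chrom_c (m : seq bool) : nat :=
  let sv := support m in
  max_over (rgs m 0) (fun l => b_coloring_c sv (ncolors sv l) l) (ncolors sv).

Definition submask (m1 m2 : seq bool) : bool :=
  all (fun i => nth false m1 i ==> nth false m2 i) (iota 0 n).

Definition b_chrom_table : seq (seq bool * nat) := [seq (m, b_chrom_c m) | m <- masks n].

Definition b_chrom_r_c (tab : seq (seq bool * nat)) (m : seq bool) : nat :=
  max_over tab (fun p => submask p.1 m) snd.

Lemma all_iotaP (P : pred nat) k : reflect (forall j, j < k -> P j) (all P (iota 0 k)).
Proof.
apply: (iffP allP) => [HP j jk | HP j]; first by apply: HP; rewrite mem_iota.
by rewrite mem_iota => /andP[_ /HP].
Qed.

Lemma all_ordP (P : pred nat) : reflect (forall x : 'I_n, P x) (all P (iota 0 n)).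
Proof.
by apply: (iffP (all_iotaP P n)) => [HP x | HP j jn]; [apply: HP | apply: (HP (Ordinal jn))].
Qed.

Lemma has_ordP (P : pred nat) : reflect (exists x : 'I_n, P x) (has P (iota 0 n)).
Proof.
apply: (iffP hasP) => [[j] | [x Px]]; last by exists (val x); rewrite // mem_iota add0n ltn_ord.
by rewrite mem_iota => /andP[_ jn] Pj; exists (Ordinal jn).
Qed.

Section Support.
Variable m : seq bool.

Lemma in_set_of_mask (x : 'I_n) : (x \in set_of_mask m) = nth false m x.
Proof. by rewrite inE. Qed.

Lemma all_supportP (P : pred nat) :
  reflect (forall x : 'I_n, x \in set_of_mask m -> P x) (all P (support m)).
Proof.
rewrite all_filter; apply: (iffP (all_ordP _)) => HP x.
  by rewrite in_set_of_mask => /(implyP (HP x)).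
by apply/implyP; rewrite -in_set_of_mask; apply: HP.
Qed.

Lemma has_supportP (P : pred nat) :
  reflect (exists2 x : 'I_n, x \in set_of_mask m & P x) (has P (support m)).
Proof.
apply: (iffP hasP) => [[i] | [x mx Px]].
  rewrite /support mem_filter mem_iota add0n => /and3P[mi _ i_lt] Pi.
  by exists (Ordinal i_lt); rewrite ?in_set_of_mask.
by exists (val x); rewrite // /support mem_filter -in_set_of_mask mx mem_iota add0n ltn_ord.
Qed.

Lemma b_coloring_cP k l :
  b_coloring_c (support m) k l <-> b_coloring graph_rel (set_of_mask m) k (fun x => nth 0 l x).
Proof.
split.
- case/and4P=> /all_supportP c_lt /all_iotaP c_onto /all_supportP c_prop /all_iotaP c_b.
  split; first split => //.
  + by move=> j /c_onto/has_supportP[x xS /eqP cx]; exists x.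
  + move=> x y xS yS exy; have /all_supportP/(_ y yS) := c_prop x xS.
    by rewrite [adj _ _]exy => /eqP.
  move=> i /c_b/has_supportP[x xS /andP[/eqP cx /all_iotaP bx]]; exists x; split=> //.
  move=> j jk /eqP jx; have /has_supportP[y yS /andP[exy /eqP cy]] := implyP (bx j jk) jx.
  by exists y.
case=> [[c_lt c_onto c_prop] c_b]; apply/and4P; split.
- exact/all_supportP.
- apply/all_iotaP => j /c_onto[x xS cx]; apply/has_supportP; exists x; rewrite ?cx //.
- apply/all_supportP => x xS; apply/all_supportP => y yS; apply/implyP => exy.
  exact/eqP/(c_prop x y xS yS exy).
apply/all_iotaP => i /c_b[x [xS <- bx]]; apply/has_supportP; exists x; rewrite // eqxx /=.
apply/all_iotaP => j jk; apply/implyP => /eqP jx; have [y [yS exy cy]] := bx j jk jx.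
by apply/has_supportP; exists y; rewrite // [adj _ _]exy cy eqxx.
Qed.

Lemma ncolors_b_coloring k l : b_coloring_c (support m) k l -> ncolors (support m) l = k.
Proof.
case/and4P=> c_lt c_onto _ _; apply/eqP; rewrite eqn_leq; apply/andP; split.
  by rewrite /ncolors foldrE big_map; apply/bigmax_leqP_seq => x /(allP c_lt).
case: k c_lt c_onto => // k _ /all_iotaP/(_ k (ltnSn k))/hasP[x xS /eqP cx].
by rewrite /ncolors foldrE big_map (bigmaxn_sup_seq x) // cx.
Qed.

Hypothesis size_m : size m = n.

Lemma has_b_coloring_rgs k : has_b_coloring graph_rel (set_of_mask m) k <->
  exists2 l, l \in rgs m 0 & b_coloring_c (support m) k l.
Proof.
split; last by case=> l _ /b_coloring_cP Hl; exists (fun x : 'I_n => nth 0 l x).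
case=> c Sc; pose l0 := [seq c x | x <- enum 'I_n].
have l0E (x : 'I_n) : nth 0 l0 x = c x by rewrite (nth_map x) ?size_enum_ord ?nth_ord_enum.
have [|r [Q [r_rgs Q_uniq HQ Hr]]] := @rgs_relabel m l0 [::] _ (isT : uniq [::]).
  by rewrite size_map size_enum_ord.
rewrite cat0s in Q_uniq Hr; exists r => //; apply/b_coloring_cP.
have [[c_lt c_onto _] _] := Sc.
have QE : Q =i gtn k.
  move=> a; apply/idP/idP => [/HQ[i mi <-] | ak].
    have i_lt : i < n.
      by rewrite -size_m ltnNge; apply: contraL mi => /(nth_default false) ->.
    by rewrite (l0E (Ordinal i_lt)) inE; apply: c_lt; rewrite inE.
  have [x xS <-] := c_onto a ak; rewrite in_set_of_mask in xS.
  by have [] := Hr x xS; rewrite l0E.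
apply: b_coloring_eq_in (b_coloring_reindex Q_uniq QE Sc) => x.
by rewrite in_set_of_mask => /Hr[_ ->]; rewrite l0E.
Qed.

Lemma b_chrom_cE : b_chrom_c m = b_chrom graph_rel (set_of_mask m).
Proof.
apply: eqn_thresholds => t t_gt0.
rewrite /b_chrom_c max_overE (leq_bigmax_seqP _ _ _ t_gt0) (leq_b_chrom _ _ t_gt0).
split=> [[l l_rgs /andP[Hl tl]] | [k tk /has_b_coloring_rgs[l l_rgs Hl]]].
  by exists (ncolors (support m) l) => //; apply/has_b_coloring_rgs; exists l.
by exists l; rewrite // (ncolors_b_coloring Hl) Hl.
Qed.

End Support.

Definition mask_of_set (S : {set 'I_n}) : seq bool :=
  [seq i \in map val (enum S) | i <- iota 0 n].

Lemma size_mask_of_set S : size (mask_of_set S) = n.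
Proof. by rewrite size_map size_iota. Qed.

Lemma set_of_mask_of_set S : set_of_mask (mask_of_set S) = S.
Proof.
apply/setP => x; rewrite in_set_of_mask (nth_map 0) ?size_iota // nth_iota // add0n.
by rewrite (mem_map val_inj) mem_enum.
Qed.

Lemma submaskP m1 m2 : reflect (set_of_mask m1 \subset set_of_mask m2) (submask m1 m2).
Proof.
apply: (iffP (all_ordP _)) => [H | /subsetP H x].
  by apply/subsetP => x; rewrite !in_set_of_mask; apply/implyP/H.
by apply/implyP; rewrite -!in_set_of_mask; apply: H.
Qed.

Lemma b_chrom_r_cE m : size m = n ->
  b_chrom_r_c b_chrom_table m = b_chrom_r graph_rel (set_of_mask m).
Proof.
move=> size_m; apply: eqn_thresholds => t t_gt0.
rewrite /b_chrom_r_c max_overE /b_chrom_r.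
rewrite (leq_bigmax_seqP _ _ _ t_gt0) (leq_bigmaxP _ _ t_gt0).
split=> [[_ /mapP[m' m'_masks ->] /andP[/submaskP m'm tm']] | [S /andP[Sm tS]]].
  have /eqP size_m' : size m' == n by rewrite -mem_masks.
  by exists (set_of_mask m'); rewrite m'm -b_chrom_cE.
exists (mask_of_set S, b_chrom_c (mask_of_set S)).
  by apply: map_f; rewrite mem_masks size_mask_of_set.
apply/andP; split; first by apply/submaskP; rewrite set_of_mask_of_set.
by rewrite b_chrom_cE ?size_mask_of_set // set_of_mask_of_set.
Qed.

Definition full_mask : seq bool := nseq n true.

Definition delete_mask (v : nat) : seq bool := [seq i != v | i <- iota 0 n].

Definition complete_c : bool :=
  all (fun x => all (fun y => (x != y) ==> adj x y) (iota 0 n)) (iota 0 n).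

Definition edgeless_c : bool := all (fun x => all (fun y => ~~ adj x y) (iota 0 n)) (iota 0 n).

Definition disjoint_edges_c : bool :=
  has (fun x => has (fun y => has (fun u => has (fun w =>
    [&& adj x y, adj u w, x != u, x != w, y != u & y != w])
  (iota 0 n)) (iota 0 n)) (iota 0 n)) (iota 0 n).

Definition deletion_identity_c (tab : seq (seq bool * nat)) : bool :=
  all (fun v => b_chrom_r_c tab (delete_mask v) + 2 == b_chrom_r_c tab full_mask + n %/ 2)
      (iota 0 n).

Definition exceptional_c (tab : seq (seq bool * nat)) : bool :=
  [|| (n \in [:: 2; 3]) && complete_c, edgeless_c && (4 <= n <= 5)
    | [&& 4 <= n <= 5, disjoint_edges_c & b_chrom_r_c tab full_mask < 3]].

Definition check_graph : bool :=
  let tab := b_chrom_table in deletion_identity_c tab == exceptional_c tab.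

Lemma b_chrom_r_c_full :
  b_chrom_r_c b_chrom_table full_mask = b_chrom_r graph_rel [set: 'I_n].
Proof.
rewrite b_chrom_r_cE ?size_nseq //; congr b_chrom_r.
by apply/setP => x; rewrite in_set_of_mask nth_nseq ltn_ord inE.
Qed.

Lemma b_chrom_r_c_delete (v : 'I_n) :
  b_chrom_r_c b_chrom_table (delete_mask v) = b_chrom_r graph_rel [set~ v].
Proof.
rewrite b_chrom_r_cE ?size_map ?size_iota //; congr b_chrom_r.
by apply/setP => x; rewrite in_set_of_mask (nth_map 0) ?size_iota // nth_iota // !inE.
Qed.

Lemma complete_cP : reflect (complete_graph graph_rel) complete_c.
Proof.
apply: (iffP (all_ordP _)) => [K x y | K x]; last by apply/all_ordP => y; apply/implyP/K.
by move/all_ordP/(_ y)/implyP: (K x).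
Qed.

Lemma edgeless_cP : reflect (edgeless graph_rel) edgeless_c.
Proof.
apply: (iffP (all_ordP _)) => [E0 x y | E0 x]; last by apply/all_ordP => y; apply: E0.
exact: (elimT (all_ordP _) (E0 x) y).
Qed.

Lemma disjoint_edges_cP : reflect (has_disjoint_edges graph_rel) disjoint_edges_c.
Proof.
apply: (iffP idP).
  case/has_ordP => x /has_ordP[y /has_ordP[u /has_ordP[w /and3P[exy euw xyuw]]]].
  by exists x, y, u, w; rewrite disjoint_set2.
case=> x [y [u [w [exy euw]]]]; rewrite disjoint_set2 => xyuw.
apply/has_ordP; exists x; apply/has_ordP; exists y; apply/has_ordP; exists u.
by apply/has_ordP; exists w; rewrite [adj x y]exy [adj u w]euw.
Qed.

Lemma deletion_identity_cP :
  deletion_identity_c b_chrom_table <-> deletion_identity graph_rel.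
Proof.
rewrite /deletion_identity card_ord -b_chrom_r_c_full.
split=> [/all_ordP del_id v | del_id]; first by rewrite -b_chrom_r_c_delete; apply/eqP.
by apply/all_ordP => v; rewrite b_chrom_r_c_delete del_id.
Qed.

Lemma exceptional_cP : exceptional_c b_chrom_table <-> exceptional_graph graph_rel.
Proof.
have atomE : (exists S, is_b_atom graph_rel 3 S) <->
    ~~ (b_chrom_r_c b_chrom_table full_mask < 3).
  by rewrite b_chrom_r_c_full -leqNgt b_atom_leq_b_chrom_r.
apply: iff_trans (iff_sym (rwP or3P)) (or3_iff _ _ _); rewrite /is_P2 /is_C3 card_ord.
- rewrite !inE; split=> [/andP[/orP[]/eqP n23 /complete_cP K] | [] [n23 /complete_cP ->]];
  by [left | right | rewrite n23 ?orbT].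
- by split=> [/andP[/edgeless_cP E0 n45] | [/edgeless_cP -> ->]].
split=> [/and3P[n45 /disjoint_edges_cP D phi3] | [-> [/disjoint_edges_cP -> /atomE]]].
  by split=> //; split=> // /atomE; rewrite phi3.
by case: (_ < 3).
Qed.

Lemma check_graphP :
  check_graph -> deletion_identity graph_rel <-> exceptional_graph graph_rel.
Proof.
move/eqP=> check_eq; apply: iff_trans (iff_sym deletion_identity_cP) _.
by rewrite check_eq; apply: exceptional_cP.
Qed.

End Decision.

Definition upairs (n : nat) : seq (nat * nat) :=
  [seq p <- [seq (i, j) | i <- iota 0 n, j <- iota 0 n] | p.1 < p.2].

Definition adj_matrix (n : nat) (bits : seq bool) : seq (seq bool) :=
  let edge i j := nth false bits (index (i, j) (upairs n)) in
  [seq [seq if i < j then edge i j else if j < i then edge j i else false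
       | j <- iota 0 n] | i <- iota 0 n].

Definition adj_of_matrix (am : seq (seq bool)) (i j : nat) : bool :=
  nth false (nth [::] am i) j.

Lemma adj_matrix_onto n (e : rel 'I_n) : symmetric e -> irreflexive e ->
  exists2 bits, size bits = size (upairs n) &
    graph_rel (adj_of_matrix (adj_matrix n bits)) =2 e.
Proof.
move=> e_sym e_irr.
pose edge (p : nat * nat) := if insub p.1 is Some x then
  if insub p.2 is Some y then e x y else false else false.
exists [seq edge p | p <- upairs n]; first by rewrite size_map.
have pairP (x y : 'I_n) : x < y -> (val x, val y) \in upairs n.
  move=> xy; rewrite mem_filter xy; apply/allpairsP.
  by exists (val x, val y); rewrite !mem_iota /= !add0n !ltn_ord.
move=> x y; rewrite /graph_rel /adj_of_matrix /adj_matrix.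
rewrite (nth_map 0) ?size_iota // (nth_map 0) ?size_iota // !nth_iota // !add0n.
case: ltngtP => [xy | yx | /val_inj->]; last by rewrite e_irr.
- by rewrite (nth_map (0, 0)) ?index_mem ?nth_index ?pairP // /edge /= !valK.
by rewrite (nth_map (0, 0)) ?index_mem ?nth_index ?pairP // /edge /= !valK e_sym.
Qed.

Definition check_all (n : nat) : bool :=
  all (fun bits => check_graph n (adj_of_matrix (adj_matrix n bits)))
      (masks (size (upairs n))).

Lemma check_all_small n : 2 <= n <= 5 -> check_all n.
Proof. by case: n => [//|[//|[|[|[|[|//]]]]]] _; vm_compute. Qed.

Lemma deletion_identity_small (T : finType) (e : rel T) :
  symmetric e -> irreflexive e -> 2 <= #|T| <= 5 ->
  deletion_identity e <-> exceptional_graph e.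
Proof.
move=> e_sym e_irr T_small.
pose f := @enum_val T (pred_of_simpl predT); pose g := @enum_rank T.
have fK : cancel f g by apply: enum_valK.
have gK : cancel g f by apply: enum_rankK.
have [bits size_bits bits_e] := @adj_matrix_onto _ [rel x y | e (f x) (f y)]
  (fun x y => e_sym (f x) (f y)) (fun x => e_irr (f x)).
have /allP/(_ bits) := check_all_small T_small.
rewrite mem_masks size_bits eqxx => /(_ isT)/check_graphP check_ok.
apply: iff_trans (iff_sym (deletion_identity_iso fK gK bits_e)) _.
exact: iff_trans check_ok (exceptional_graph_iso fK gK bits_e).
Qed.

Lemma deletion_identity_card (T : finType) (e : rel T) :
  0 < #|T| -> deletion_identity e -> 2 <= #|T| <= 5.
Proof.
case/card_gt0P=> v _ /(_ v).
have := b_chrom_r_card e [set~ v]; have := b_chrom_r_card e [set: T].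
have := b_chrom_rS e (subsetT [set~ v]); rewrite cardsC1 cardsT; lia.
Qed.

Lemma exceptional_graph_card (T : finType) (e : rel T) :
  exceptional_graph e -> 2 <= #|T| <= 5.
Proof. by case=> [[[-> _] | [-> _]] | [_ card_T] | [card_T _]] //; lia. Qed.

Local Open Scope ring_scope.

Theorem mainTheorem14 (T : finType) (e : rel T)
    (e_sym : symmetric e) (e_irr : irreflexive e) (T_ne : (0 < #|T|)%N) :
  (forall v : T,
     (b_chrom_r e [set~ v])%:Z
       = (b_chrom_r e [set: T])%:Z + (#|T| %/ 2)%N%:Z - 2)
  <->
  [\/ is_P2 e \/ is_C3 e,
      (forall x y : T, ~~ e x y) /\ (4 <= #|T| <= 5)%N
    | (4 <= #|T| <= 5)%N /\
      (exists x y u w : T,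
         [/\ e x y, e u w & [disjoint [set x; y] & [set u; w]]]) /\
      ~ (exists S : {set T}, is_b_atom e 3 S)].
Proof.
have int_eq : (forall v : T, (b_chrom_r e [set~ v])%:Z
    = (b_chrom_r e [set: T])%:Z + (#|T| %/ 2)%N%:Z - 2) <-> deletion_identity e.
  by split=> del_id v; move: (del_id v); lia.
apply: iff_trans int_eq _.
have [T_small | T_large] := boolP (2 <= #|T| <= 5)%N; first exact: deletion_identity_small.
by split=> [/(deletion_identity_card T_ne) | /exceptional_graph_card]; rewrite (negbTE T_large).
Qed.
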